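(* Let $A\in\mathbb{R}^{n\times n}$, $B\in\mathbb{R}^{n\times m}$, $C\in\mathbb{R}^{m\times n}$, $D\in\mathbb{R}^{m\times m}$ with $D+D^T=0$, and consider the system $\dot x=Ax+Bu$, $y=Cx+Du$. The following two statements are equivalent: (1) There exists a change of basis $x=Tz$ with an invertible $T\in\mathbb{R}^{n\times n}$ such that the resulting realization $(T^{-1}AT,\,T^{-1}B,\,CT,\,D)$ has port-Hamiltonian structure, i.e. there exist $J,R,Q\in\mathbb{R}^{n\times n}$, $F,P\in\mathbb{R}^{n\times m}$, $S,N\in\mathbb{R}^{m\times m}$ with $J=-J^T$, $R=R^T$, $Q=Q^T$ positive definite, $S=S^T$, $N=-N^T$, $\begin{bmatrix}R&P\\P^T&S\end{bmatrix}$ symmetric positive semidefinite, and $T^{-1}AT=(J-R)Q$, $T^{-1}B=F-P$, $CT=(F+P)^TQ$, $D=S+N$. (2) There exists an invertible matrix $T\in\mathbb{R}^{n\times n}$ such that $(TB)^T=CT^{-1}$ and $(TAT^{-1})^T+TAT^{-1}$ is negative semidefinite. *)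

From HB Require Import structures.
From mathcomp Require Import all_boot all_order all_algebra.
From mathcomp Require Import reals.
Set Implicit Arguments. Unset Strict Implicit. Unset Printing Implicit Defensive.
Import Order.TTheory GRing.Theory Num.Theory.
Local Open Scope ring_scope.

Definition qform (R : realType) (k : nat) (M : 'M[R]_k) (x : 'rV[R]_k) : R :=
  (x *m M *m x^T) 0 0.

Definition sym_mx (R : realType) (k : nat) (M : 'M[R]_k) : Prop := M^T = M.
Definition skew_sym (R : realType) (k : nat) (M : 'M[R]_k) : Prop := M^T = - M.

Definition posdefmx (R : realType) (k : nat) (M : 'M[R]_k) : Prop :=
  sym_mx M /\ forall x : 'rV[R]_k, x != 0 -> 0 < qform M x.

Definition psdmx (R : realType) (k : nat) (M : 'M[R]_k) : Prop :=
  sym_mx M /\ forall x : 'rV[R]_k, 0 <= qform M x.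

Definition nsdmx (R : realType) (k : nat) (M : 'M[R]_k) : Prop :=
  sym_mx M /\ forall x : 'rV[R]_k, qform M x <= 0.

From HB Require Import structures.
From mathcomp Require Import all_boot all_order all_algebra.
From mathcomp Require Import reals ring lra.
Import Order.TTheory GRing.Theory Num.Theory.
Local Open Scope ring_scope.

(* (2) => (1): in the coordinates T x the realization is port-Hamiltonian with
   Q = 1, J and -R the skew and symmetric parts of T A T^-1, F = T B and
   P = S = 0.
   (1) => (2): D + D^T = 0 forces S = 0, hence P = 0 because [R P; P^T 0] is
   positive semidefinite.  Factoring Q = W^T W (Cholesky), the coordinates W z
   turn (J - R) Q into W (J - R) W^T, whose symmetric part -2 W R W^T is
   negative semidefinite, and the output matrix F^T Q into (W F)^T. *)

Section Preliminaries.
Set Implicit Arguments.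

Lemma scaleVn_mulrn (F : numFieldType) (V : lmodType F) n (v : V) :
  n != 0%N -> n%:R^-1 *: (v *+ n) = v.
Proof. by move=> n0; rewrite -scaler_nat scalerA mulVf ?pnatr_eq0 ?scale1r. Qed.

Lemma affine_ge0_slope0 (F : realFieldType) (a c : F) :
  (forall t, 0 <= a + t * c) -> c = 0.
Proof.
move=> ge0; apply/eqP; apply: contraT => c0.
have := ge0 (- (a + 1) / c).
by rewrite mulfVK //; lra.
Qed.

Lemma invmxM (F : comUnitRingType) k (M N : 'M[F]_k) :
  M \in unitmx -> N \in unitmx -> invmx (M *m N) = invmx N *m invmx M.
Proof.
move=> Mu Nu; have MNu : M *m N \in unitmx by rewrite unitmx_mul Mu.
have E : M *m N *m (invmx N *m invmx M) = 1%:M by rewrite mulmxA mulmxK ?mulmxV.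
by rewrite -[LHS]mulmx1 -E mulKmx.
Qed.

Lemma block_mx_ldl (F : fieldType) k (s : F) (b : 'M[F]_(1, k)) (d : 'M[F]_k) :
  s != 0 ->
  let L := block_mx 1%:M (s^-1 *: b) 0 1%:M in
  block_mx s%:M b b^T d =
    L^T *m block_mx s%:M 0 0 (d - s^-1 *: (b^T *m b)) *m L.
Proof.
move=> s0 L; rewrite /L tr_block_mx !mulmx_block !trmx1 !trmx0.
rewrite !(mul0mx, mulmx0, mul1mx, mulmx1, add0r, addr0).
rewrite mul_mx_scalar mul_scalar_mx.
rewrite !scalerA mulfV // !scale1r linearZ /= scalerA mulfV // scale1r.
by rewrite -scalemxAr addrC subrK.
Qed.

End Preliminaries.

Section SymmetricMatrices.
Set Implicit Arguments.
Variable R : realType.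
Implicit Types (k l : nat) (a : R).

Lemma qformD k (M N : 'M[R]_k) x : qform (M + N) x = qform M x + qform N x.
Proof. by rewrite /qform mulmxDr mulmxDl mxE. Qed.

Lemma qformN k (M : 'M[R]_k) x : qform (- M) x = - qform M x.
Proof. by rewrite /qform mulmxN mulNmx mxE. Qed.

Lemma qformZ k a (M : 'M[R]_k) x : qform (a *: M) x = a * qform M x.
Proof. by rewrite /qform -scalemxAr -scalemxAl mxE. Qed.

Lemma qform_mulmx k l (W : 'M[R]_(k, l)) (M : 'M[R]_l) x :
  qform (W *m M *m W^T) x = qform M (x *m W).
Proof. by rewrite /qform trmx_mul !mulmxA. Qed.

Lemma qform_block k l (M : 'M[R]_k) (P : 'M[R]_(k, l)) (S : 'M[R]_l) u v :
  qform (block_mx M P P^T S) (row_mx u v) =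
  qform M u + 2 * (u *m P *m v^T) 0 0 + qform S v.
Proof.
have cross : (v *m P^T *m u^T) 0 0 = (u *m P *m v^T) 0 0.
  transitivity ((u *m P *m v^T)^T 0 0); last by rewrite mxE.
  by rewrite !trmx_mul trmxK mulmxA.
move: cross; rewrite /qform mul_row_block tr_row_mx mul_row_col !mulmxDl !mxE.
by move->; ring.
Qed.

Lemma qform0 k (x : 'rV[R]_k) : qform 0 x = 0.
Proof. by rewrite /qform mulmx0 mul0mx mxE. Qed.

Lemma qformx0 k (M : 'M[R]_k) : qform M 0 = 0.
Proof. by rewrite /qform !mul0mx mxE. Qed.

Lemma psdmxN k (M : 'M[R]_k) : psdmx (- M) <-> nsdmx M.
Proof.
rewrite /psdmx /nsdmx /sym_mx linearN /=.
split=> -[symM qM]; split.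
- exact: oppr_inj.
- by move=> x; have := qM x; rewrite qformN oppr_ge0.
- by rewrite symM.
- by move=> x; rewrite qformN oppr_ge0.
Qed.

Lemma psdmxD k (M N : 'M[R]_k) : psdmx M -> psdmx N -> psdmx (M + N).
Proof.
move=> [symM qM] [symN qN]; split=> [|x]; last by rewrite qformD addr_ge0.
by rewrite /sym_mx linearD /= symM symN.
Qed.

Lemma psdmxZ k a (M : 'M[R]_k) : 0 <= a -> psdmx M -> psdmx (a *: M).
Proof.
move=> a_ge0 [symM qM]; split=> [|x]; first by rewrite /sym_mx linearZ /= symM.
by rewrite qformZ mulr_ge0.
Qed.

Lemma psdmx_mulmx k l (W : 'M[R]_(k, l)) (M : 'M[R]_l) :
  psdmx M -> psdmx (W *m M *m W^T).
Proof.
move=> [symM qM]; split=> [|x]; last by rewrite qform_mulmx.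
by rewrite /sym_mx !trmx_mul trmxK symM mulmxA.
Qed.

Lemma nsdmx_mulmx_symD k l (W : 'M[R]_(k, l)) (K : 'M[R]_l) :
  nsdmx (K^T + K) -> nsdmx ((W *m K *m W^T)^T + W *m K *m W^T).
Proof.
have -> : (W *m K *m W^T)^T + W *m K *m W^T = W *m (K^T + K) *m W^T.
  by rewrite mulmxDr mulmxDl !trmx_mul trmxK mulmxA.
by move=> nsdK; apply/psdmxN; rewrite -mulNmx -mulmxN; apply/psdmx_mulmx/psdmxN.
Qed.

Lemma psdmx_block_mx0 k l (M : 'M[R]_k) :
  psdmx (block_mx M 0 0 (0 : 'M_l)) <-> psdmx M.
Proof.
have qE x : qform (block_mx M 0 0 (0 : 'M_l)) x = qform M (lsubmx x).
  rewrite -[x]hsubmxK -[X in block_mx _ _ X _]trmx0 qform_block row_mxKl.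
  by rewrite mulmx0 mul0mx mxE qform0 mulr0 !addr0.
split=> -[symB qB]; split.
- by move: symB; rewrite /sym_mx tr_block_mx => /eq_block_mx[].
- by move=> x; have := qB (row_mx x 0); rewrite qE row_mxKl.
- by rewrite /sym_mx tr_block_mx symB !trmx0.
- by move=> x; rewrite qE.
Qed.

Lemma psdmx_block_corner0 k l (M : 'M[R]_k) (P : 'M[R]_(k, l)) :
  psdmx (block_mx M P P^T 0) -> P = 0.
Proof.
move=> [_ qB]; apply/matrixP => i j; rewrite mxE.
pose u : 'rV[R]_k := delta_mx 0 i; pose v : 'rV[R]_l := delta_mx 0 j.
have Puv : (u *m P *m v^T) 0 0 = P i j by rewrite -rowE trmx_delta -colE !mxE.
suff : 2 * P i j = 0 by move/eqP; rewrite mulf_eq0 pnatr_eq0 => /eqP.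
apply: (@affine_ge0_slope0 _ (qform M u)) => t.
have := qB (row_mx u (t *: v)); rewrite qform_block qform0 addr0.
by rewrite linearZ /= -scalemxAr mxE Puv mulrCA.
Qed.

Lemma posdefmx1 k : posdefmx (1%:M : 'M[R]_k).
Proof.
split=> [|x x0]; first exact: trmx1.
have [j xj0] : exists j, x 0 j != 0.
  apply/existsP; apply: contraR x0; rewrite negb_exists => /forallP x0j.
  by apply/eqP/matrixP => i j; rewrite ord1 mxE; exact/eqP/negPn/x0j.
rewrite /qform mulmx1 mxE (bigD1 j) //= mxE -expr2; apply: ltr_wpDr.
  by apply: sumr_ge0 => i _; rewrite mxE -expr2 sqr_ge0.
by rewrite lt_def sqr_ge0 sqrf_eq0 xj0.
Qed.

Lemma posdefmx_drsub k l (M : 'M[R]_k) (P : 'M[R]_(k, l)) (S : 'M[R]_l) :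
  posdefmx (block_mx M P P^T S) -> posdefmx S.
Proof.
move=> [symB qB]; split=> [|x x0].
  by move: symB; rewrite /sym_mx tr_block_mx => /eq_block_mx[].
have := qB (row_mx 0 x); rewrite qform_block qformx0 !mul0mx mxE mulr0 !add0r.
by apply; apply: contra x0 => /eqP; rewrite -row_mx0 => /eq_row_mx[_ ->].
Qed.

Lemma posdefmx_congrK k (W M : 'M[R]_k) :
  W \in unitmx -> posdefmx (W^T *m M *m W) -> posdefmx M.
Proof.
move=> Wu [symB qB]; have WTu : W^T \in unitmx by rewrite unitmx_tr.
split=> [|x x0].
  move: symB; rewrite /sym_mx !trmx_mul trmxK mulmxA.
  move/(congr1 (mulmx^~ (invmx W))); rewrite !mulmxK //.
  by move/(congr1 (mulmx (invmx W^T))); rewrite !mulKmx.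
have := qB (x *m invmx W^T).
rewrite -[X in qform (_ *m _ *m X)]trmxK qform_mulmx mulmxKV //.
by apply; apply: contra x0 => /eqP x0; rewrite -(mulmxKV WTu x) x0 mul0mx.
Qed.

Lemma posdefmx_gram k (Q : 'M[R]_k) :
  posdefmx Q -> exists2 W : 'M[R]_k, W \in unitmx & Q = W^T *m W.
Proof.
elim: k Q => [|k IHk] Q Qpd.
  by exists 1%:M; rewrite ?unitmx1 // [LHS]flatmx0 [RHS]flatmx0.
move: Q Qpd; rewrite -[k.+1]/(1 + k)%N => Q Qpd.
have [s [b [d QE]]] : exists s b d, Q = block_mx s%:M b b^T d.
  exists (ulsubmx Q 0 0), (ursubmx Q), (drsubmx Q).
  have := Qpd.1; rewrite /sym_mx -[Q in Q^T]submxK -[RHS]submxK tr_block_mx.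
  by case/eq_block_mx=> _ _ -> _; rewrite -mx11_scalar submxK.
rewrite {Q}QE in Qpd *.
have s_gt0 : 0 < s.
  have := Qpd.2 (row_mx 1%:M 0); rewrite qform_block qformx0 trmx0 mulmx0 mxE.
  rewrite /qform mul1mx trmx1 mulmx1 mxE eqxx mulr1n mulr0 !addr0; apply.
  apply/eqP => /matrixP/(_ 0 (lshift k 0)); rewrite row_mxEl !mxE eqxx /=.
  by move/eqP; rewrite oner_eq0.
pose L := block_mx 1%:M (s^-1 *: b) 0 1%:M.
have QE : block_mx s%:M b b^T d =
    L^T *m block_mx s%:M 0 0 (d - s^-1 *: (b^T *m b)) *m L.
  exact: block_mx_ldl (lt0r_neq0 s_gt0).
have Lu : L \in unitmx by rewrite unitmxE det_ublock !det1 mulr1 unitr1.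
have [V Vu SchE] : exists2 V : 'M[R]_k, V \in unitmx &
    d - s^-1 *: (b^T *m b) = V^T *m V.
  apply: IHk; apply: (@posdefmx_drsub 1 _ s%:M 0); rewrite trmx0.
  by apply: (posdefmx_congrK Lu); rewrite -QE.
exists (block_mx (Num.sqrt s)%:M 0 0 V *m L).
  rewrite unitmx_mul Lu andbT unitmxE det_ublock det_scalar1 unitrM -unitmxE Vu.
  by rewrite andbT unitfE sqrtr_eq0 -ltNge.
rewrite QE trmx_mul -!mulmxA; congr (_ *m _); rewrite !mulmxA; congr (_ *m _).
rewrite tr_block_mx mulmx_block !trmx0 !mul0mx !mulmx0 !addr0 !add0r SchE.
by rewrite tr_scalar_mx -scalar_mxM -expr2 sqr_sqrtr ?ltW.
Qed.

Lemma sym_skew_eq0 k (S : 'M[R]_k) : sym_mx S -> skew_sym S -> S = 0.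
Proof.
move=> symS skewS.
rewrite -[S](@scaleVn_mulrn _ _ 2) // [S *+ 2]mulr2n -{1}symS skewS addNr.
by rewrite scaler0.
Qed.

End SymmetricMatrices.

Section PortHamiltonian.
Set Implicit Arguments.
Variables (R : realType) (n m : nat).

Definition ph_realization (A : 'M[R]_n) (B : 'M[R]_(n, m)) (C : 'M[R]_(m, n))
    (D : 'M[R]_m) : Prop :=
  exists (J Rm Q : 'M[R]_n) (F P : 'M[R]_(n, m)) (S N : 'M[R]_m),
    [/\ skew_sym J, sym_mx Rm, posdefmx Q, sym_mx S & skew_sym N] /\
    psdmx (block_mx Rm P P^T S) /\
    [/\ A = (J - Rm) *m Q, B = F - P, C = (F + P)^T *m Q & D = S + N].

Definition ph_normal_form (A : 'M[R]_n) (B : 'M[R]_(n, m)) (C : 'M[R]_(m, n)) :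
    Prop :=
  B^T = C /\ nsdmx (A^T + A).

Lemma ph_realization_normal_form A B C D :
  skew_sym D -> ph_realization A B C D ->
  exists2 W, W \in unitmx &
    ph_normal_form (W *m A *m invmx W) (W *m B) (C *m invmx W).
Proof.
move=> skewD [J [Rm [Q [F [P [S [N]]]]]]].
move=> [[skewJ symRm Qpd symS skewN] [psdB [-> -> -> DE]]].
have S0 : S = 0.
  apply: sym_skew_eq0 => //; rewrite /skew_sym -[S](addrK N) -DE linearB /=.
  by rewrite skewD skewN opprB opprK addrC.
subst S; have P0 := psdmx_block_corner0 psdB; subst P.
have psdRm : psdmx Rm by move: psdB; rewrite trmx0 => /psdmx_block_mx0.
have [W Wu QE] := posdefmx_gram Qpd.
exists W => //; rewrite subr0 addr0 QE; split.
  by rewrite trmx_mul mulmxA mulmxK.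
have -> : W *m ((J - Rm) *m (W^T *m W)) *m invmx W = W *m (J - Rm) *m W^T.
  by rewrite !mulmxA mulmxK.
apply: nsdmx_mulmx_symD; apply/psdmxN.
rewrite linearB /= skewJ symRm addrACA addNr add0r opprD opprK.
exact: psdmxD.
Qed.

Lemma ph_normal_form_realization A B C D : skew_sym D -> ph_normal_form A B C ->
  ph_realization A B C D.
Proof.
move=> skewD [<- nsdA].
exists (2^-1 *: (A - A^T)), (2^-1 *: - (A^T + A)), 1%:M, B, 0, 0, D.
have psdRm : psdmx (2^-1 *: - (A^T + A)).
  by apply: psdmxZ; [rewrite invr_ge0 ler0n | apply/psdmxN].
split; [split | split].
- by rewrite /skew_sym linearZ /= linearB /= trmxK -scalerN opprB.
- exact: psdRm.1.
- exact: posdefmx1.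
- exact: trmx0.
- exact: skewD.
- by rewrite trmx0; apply/psdmx_block_mx0.
- split; rewrite ?subr0 ?addr0 ?add0r ?mulmx1 //.
  by rewrite -scalerBr opprK addrA subrK -mulr2n scaleVn_mulrn.
Qed.

End PortHamiltonian.

Theorem corollary3p1 (R : realType) (n m : nat)
  (A : 'M[R]_n) (B : 'M[R]_(n, m)) (C : 'M[R]_(m, n)) (D : 'M[R]_m)
  (hD : D + D^T = 0) :
  (exists T : 'M[R]_n, T \in unitmx /\
     exists (J Rm Q : 'M[R]_n) (F P : 'M[R]_(n, m)) (S N : 'M[R]_m),
       [/\ skew_sym J, sym_mx Rm, posdefmx Q, sym_mx S
         & skew_sym N] /\ psdmx (block_mx Rm P P^T S) /\
         [/\ invmx T *m A *m T = (J - Rm) *m Q,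
               invmx T *m B = F - P,
               C *m T = (F + P)^T *m Q
             & D = S + N])
  <->
  (exists T : 'M[R]_n, T \in unitmx /\
     (T *m B)^T = C *m invmx T /\
     nsdmx ((T *m A *m invmx T)^T + T *m A *m invmx T)).
Proof.
have skewD : skew_sym D by apply/eqP; rewrite -addr_eq0 addrC hD.
split=> [[T [Tu ph]] | [T [Tu nf]]].
- have [W Wu nf] := ph_realization_normal_form skewD ph.
  have Tiu : invmx T \in unitmx by rewrite unitmx_inv.
  exists (W *m invmx T); split; first by rewrite unitmx_mul Wu.
  by move: nf; rewrite invmxM // invmxK !mulmxA.
- exists (invmx T); split; first by rewrite unitmx_inv.
  by apply: ph_normal_form_realization; rewrite // invmxK.
Qed.
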